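(* Consider the randomized mechanism which, given a profile $\mathbf x\in[0,1]^n$ with $n_1=|\{i:x_i\in[0,\tfrac12]\}|$ and $n_2=|\{i:x_i\in(\tfrac12,1]\}|$, outputs $y=0$ with probability $\frac{n_2^2}{n_1^2+n_2^2}$ and $y=1$ with probability $\frac{n_1^2}{n_1^2+n_2^2}$. This mechanism is a $2$-approximation for the $L_p$ social cost both for $p=1$ and for $p=+\infty$.
   Context: Agent $i$ at $x_i\in[0,1]$ incurs cost $c(x_i,y)=1-|x_i-y|$ from a facility at $y\in[0,1]$. $\mathrm{sc}_1(y,\mathbf x)=\sum_ic(x_i,y)$ and $\mathrm{sc}_\infty(y,\mathbf x)=\max_ic(x_i,y)$. A randomized mechanism $f$ is an $\alpha$-approximation if $\mathbb E_{y\sim f(\mathbf x)}[\mathrm{sc}_p(y,\mathbf x)]\le\alpha\min_{z\in[0,1]}\mathrm{sc}_p(z,\mathbf x)$ for every profile $\mathbf x$. *)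

From HB Require Import structures.
From mathcomp Require Import all_boot all_order all_algebra.
Set Implicit Arguments. Unset Strict Implicit. Unset Printing Implicit Defensive.
Import Order.TTheory GRing.Theory Num.Theory.
Local Open Scope ring_scope.

Section FL.
Variables (R : realFieldType) (n : nat).

Definition cost (xi y : R) : R := 1 - `|xi - y|.

Definition sc1 (x : 'I_n -> R) (y : R) : R := \sum_(i < n) cost (x i) y.

(* L_infinity social cost: max_i c(x_i,y).  The neutral element 0 is harmless:
   for x_i, y in [0,1] every cost is >= 0, and n >= 1 in the theorem. *)
Definition scinf (x : 'I_n -> R) (y : R) : R :=
  \big[Num.max/0]_(i < n) cost (x i) y.

Definition n1 (x : 'I_n -> R) : nat := #|[set i : 'I_n | x i <= 2^-1]|.
Definition n2 (x : 'I_n -> R) : nat := #|[set i : 'I_n | 2^-1 < x i]|.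

Definition prob0 (x : 'I_n -> R) : R :=
  ((n2 x)%:R ^+ 2) / ((n1 x)%:R ^+ 2 + (n2 x)%:R ^+ 2).
Definition prob1 (x : 'I_n -> R) : R :=
  ((n1 x)%:R ^+ 2) / ((n1 x)%:R ^+ 2 + (n2 x)%:R ^+ 2).

Definition mech_expected (sc : ('I_n -> R) -> R -> R) (x : 'I_n -> R) : R :=
  prob0 x * sc x 0 + prob1 x * sc x 1.

Definition in01 (t : R) : Prop := 0 <= t <= 1.

(* alpha-approximation: E[sc] <= alpha * min_{z in [0,1]} sc(z,x) for every
   profile; since the min is attained, equivalently <= alpha * sc(z,x) for all z. *)
Definition mech_approx (alpha : R) (sc : ('I_n -> R) -> R -> R) : Prop :=
  forall x : 'I_n -> R, (forall i, in01 (x i)) ->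
    forall z : R, in01 z -> mech_expected sc x <= alpha * sc x z.

End FL.

(* Write a = n1, b = n2 and S_y for the social cost of the facility at y; the
   mechanism costs (b^2 S_0 + a^2 S_1) / (a^2 + b^2) in expectation.
   L_1: every agent's cost is concave in the location, so any location costs at
   least min (S_0, S_1).  Each agent contributes exactly 1 to S_0 + S_1, and the
   agents on the near side of 0 (resp. 1) pay at least 1/2 there, so
   S_0 + S_1 = a + b, 2 S_0 >= a and 2 S_1 >= b; these constraints alone bound the
   expected cost by 2 min (S_0, S_1).
   L_inf: a facility at z <= 1/2 costs every agent at least half of what the
   facility at 0 does.  The facility is placed at 0 only if some agent lies in
   (1/2, 1]; for z > 1/2 that agent pays at least 1/2, while S_0 <= 1.  The
   location 1 is symmetric. *)
From HB Require Import structures.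
From mathcomp Require Import all_boot all_order all_algebra.
From mathcomp Require Import ring lra.
Import Order.TTheory GRing.Theory Num.Theory.
Set Implicit Arguments. Unset Strict Implicit.
Local Open Scope ring_scope.

Section Cost.
Variable R : realFieldType.
Implicit Types a y z : R.

Lemma cost_le1 a y : cost a y <= 1.
Proof. by rewrite /cost lerBlDr lerDl. Qed.

Lemma cost0 a : 0 <= a -> cost a 0 = 1 - a.
Proof. by move=> a0; rewrite /cost subr0 ger0_norm. Qed.

Lemma cost1 a : a <= 1 -> cost a 1 = a.
Proof. by move=> a1; rewrite /cost distrC ger0_norm ?subr_ge0 //; ring. Qed.

Lemma cost_reflect a y : cost (1 - a) (1 - y) = cost a y.
Proof. by rewrite /cost distrC; congr (1 - `|_|); ring. Qed.

Lemma cost_ge0 a y : in01 a -> in01 y -> 0 <= cost a y.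
Proof. by move=> /andP[? ?] /andP[? ?]; rewrite /cost; case: (lerP y a); lra. Qed.

Lemma cost_concave a z : in01 a -> in01 z ->
  (1 - z) * cost a 0 + z * cost a 1 <= cost a z.
Proof.
move=> /andP[a0 a1] /andP[z0 z1]; rewrite cost0 // cost1 // /cost.
by case: (lerP z a); nra.
Qed.

Lemma cost_same_half a z : in01 a -> in01 z ->
  (a <= 2^-1) = (z <= 2^-1) -> 2^-1 <= cost a z.
Proof.
move=> /andP[a0 a1] /andP[z0 z1]; rewrite /cost.
by case: (lerP a 2^-1); case: (lerP z 2^-1) => // hz ha _; case: (lerP z a); lra.
Qed.

Lemma cost0_le_double a z : in01 a -> 0 <= z -> z <= 2^-1 ->
  cost a 0 <= 2 * cost a z.
Proof.
move=> /andP[a0 a1] z0 z1; rewrite cost0 // /cost.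
by case: (lerP z a); lra.
Qed.

Lemma cost1_le_double a z : in01 a -> 2^-1 <= z -> z <= 1 ->
  cost a 1 <= 2 * cost a z.
Proof.
move=> /andP[a0 a1] z0 z1.
rewrite -cost_reflect -[cost a z]cost_reflect subrr.
apply: cost0_le_double; rewrite /in01; lra.
Qed.

End Cost.

Lemma mulrn_card_le_sum (R : numDomainType) (I : finType) (P : pred I) (F : I -> R) c :
  (forall i, P i -> c <= F i) -> (forall i, ~~ P i -> 0 <= F i) ->
  c *+ #|[set i | P i]| <= \sum_i F i.
Proof.
move=> leP ge0; rewrite -sumr_const big_mkcond /=.
by apply: ler_sum => i _; rewrite inE; case: ifPn => [/leP|/ge0].
Qed.

(* Once [s1 = a + b - s0] is substituted, twice the gap between the two sides
   is [(3 a^2 + b^2) (2 s0 - a) + a (a - b)^2]. *)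
Lemma sqr_weighted_le_double (R : realFieldType) (a b s0 s1 : R) :
  0 <= a -> a <= 2 * s0 -> s0 + s1 = a + b ->
  b ^+ 2 * s0 + a ^+ 2 * s1 <= 2 * s0 * (a ^+ 2 + b ^+ 2).
Proof.
move=> a0 as0 sab.
have e1 : 0 <= (3 * a ^+ 2 + b ^+ 2) * (2 * s0 - a).
  by apply: mulr_ge0; nra.
have e2 : 0 <= a * (a - b) ^+ 2 by rewrite mulr_ge0 ?sqr_ge0.
have -> : s1 = a + b - s0 by rewrite -sab addrC addKr.
nra.
Qed.

Section Profile.
Variables (R : realFieldType) (n : nat) (x : 'I_n -> R).
Hypothesis hx : forall i, in01 (x i).

Lemma n1_add_n2 : (n1 x + n2 x)%N = n.
Proof.
rewrite /n1 /n2 -[n in RHS]card_ord -(cardsC [set i | x i <= 2^-1]).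
by congr (_ + _)%N; apply: eq_card => i; rewrite !inE ltNge.
Qed.

Lemma sqr_n1_add_sqr_n2_gt0 : (0 < n)%N -> 0 < (n1 x)%:R ^+ 2 + (n2 x)%:R ^+ 2 :> R.
Proof.
move=> n_gt0; have : (0 < n1 x + n2 x)%N by rewrite n1_add_n2.
rewrite addn_gt0 => /orP[h|h].
  by rewrite ltr_pwDl ?sqr_ge0 // exprn_gt0 // ltr0n.
by rewrite ltr_pwDr ?sqr_ge0 // exprn_gt0 // ltr0n.
Qed.

Lemma prob0_add_prob1 : (0 < n)%N -> prob0 x + prob1 x = 1.
Proof.
move=> /sqr_n1_add_sqr_n2_gt0 /lt0r_neq0 nz.
by rewrite /prob0 /prob1 -mulrDl addrC divff.
Qed.

Lemma mech_expectedE sc : mech_expected sc x =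
  ((n2 x)%:R ^+ 2 * sc x 0 + (n1 x)%:R ^+ 2 * sc x 1) /
  ((n1 x)%:R ^+ 2 + (n2 x)%:R ^+ 2).
Proof. by rewrite /mech_expected /prob0 /prob1 mulrDl; congr (_ + _); rewrite mulrAC. Qed.

Lemma mech_expected_le sc t : (0 < n)%N ->
  ((0 < n2 x)%N -> sc x 0 <= t) -> ((0 < n1 x)%N -> sc x 1 <= t) ->
  mech_expected sc x <= t.
Proof.
move=> n_gt0 le0 le1.
have prob_ge0 k : 0 <= k%:R ^+ 2 / ((n1 x)%:R ^+ 2 + (n2 x)%:R ^+ 2) :> R.
  by apply: divr_ge0; rewrite ?addr_ge0 ?sqr_ge0.
have weighted_le k s : ((0 < k)%N -> s <= t) ->
    k%:R ^+ 2 / ((n1 x)%:R ^+ 2 + (n2 x)%:R ^+ 2) * s <=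
    k%:R ^+ 2 / ((n1 x)%:R ^+ 2 + (n2 x)%:R ^+ 2) * t.
  case: (posnP k) => [-> _ | _ /(_ isT) st]; first by rewrite expr0n !mul0r.
  by rewrite ler_wpM2l ?prob_ge0.
rewrite -[t]mul1r -(prob0_add_prob1 n_gt0) mulrDl.
by apply: lerD; apply: weighted_le.
Qed.

Lemma sc1_ge_min z : in01 z -> Num.min (sc1 x 0) (sc1 x 1) <= sc1 x z.
Proof.
move=> hz; have /andP[z0 z1] := hz; have z1' : 0 <= 1 - z by rewrite subr_ge0.
have convex : (1 - z) * sc1 x 0 + z * sc1 x 1 <= sc1 x z.
  rewrite /sc1 !mulr_sumr -big_split /=.
  by apply: ler_sum => i _; apply: cost_concave.
apply: le_trans convex; case: (leP (sc1 x 0) (sc1 x 1)) => h.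
  by have := ler_wpM2l z0 h; lra.
by have := ler_wpM2l z1' (ltW h); lra.
Qed.

Lemma sc1_0_add_1 : sc1 x 0 + sc1 x 1 = n%:R.
Proof.
rewrite /sc1 -big_split /= -[n in n%:R]card_ord -sumr_const.
by apply: eq_bigr => i _; have /andP[? ?] := hx i; rewrite cost0 // cost1 // subrK.
Qed.

Lemma n1_le_sc1_0 : (n1 x)%:R <= 2 * sc1 x 0.
Proof.
rewrite -ler_pdivrMl // mulrC mulr_natl /sc1.
apply: mulrn_card_le_sum => i; last by move=> _; rewrite cost_ge0 // /in01 lexx ler01.
by have /andP[? _] := hx i; rewrite cost0 // => ?; lra.
Qed.

Lemma n2_le_sc1_1 : (n2 x)%:R <= 2 * sc1 x 1.
Proof.
rewrite -ler_pdivrMl // mulrC mulr_natl /sc1.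
apply: mulrn_card_le_sum => i; last by move=> _; rewrite cost_ge0 // /in01 ler01 lexx.
by have /andP[_ ?] := hx i; rewrite cost1 // => ?; lra.
Qed.

Lemma mech_sc1_le_min : (0 < n)%N ->
  mech_expected (@sc1 R n) x <= 2 * Num.min (sc1 x 0) (sc1 x 1).
Proof.
move=> n_gt0; have D_gt0 := sqr_n1_add_sqr_n2_gt0 n_gt0.
have n12 : (n1 x)%:R + (n2 x)%:R = n%:R :> R by rewrite -natrD n1_add_n2.
rewrite mech_expectedE ler_pdivrMr //.
case: (leP (sc1 x 0) (sc1 x 1)) => _.
  apply: sqr_weighted_le_double; rewrite ?ler0n ?n1_le_sc1_0 //.
  by rewrite sc1_0_add_1 n12.
rewrite (addrC (_ * sc1 x 0)) (addrC ((n1 x)%:R ^+ 2)).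
apply: sqr_weighted_le_double; rewrite ?ler0n ?n2_le_sc1_1 //.
by rewrite addrC sc1_0_add_1 addrC n12.
Qed.

Lemma le_scinf j y : cost (x j) y <= scinf x y.
Proof. exact: le_bigmax. Qed.

Lemma scinf_ge0 y : 0 <= scinf x y.
Proof. exact: bigmax_ge_id. Qed.

Lemma scinf_le1 y : scinf x y <= 1.
Proof. by apply: bigmax_le => // i _; apply: cost_le1. Qed.

Lemma scinf_le_double y z :
  (forall i, cost (x i) y <= 2 * cost (x i) z) -> scinf x y <= 2 * scinf x z.
Proof.
move=> le_cost; apply: bigmax_le => [|i _]; first by rewrite mulr_ge0 ?scinf_ge0.
by apply: le_trans (le_cost i) _; rewrite ler_pM2l ?le_scinf.
Qed.

Lemma scinf0_le_double z : (0 < n2 x)%N -> in01 z -> scinf x 0 <= 2 * scinf x z.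
Proof.
move=> /card_gt0P[j]; rewrite inE => xj hz; have /andP[z0 z1] := hz.
case: (lerP z 2^-1) => zh.
  by apply: scinf_le_double => i; apply: cost0_le_double.
have : 2^-1 <= cost (x j) z by apply: cost_same_half; rewrite // !leNgt xj zh.
by have := le_scinf j z; have := scinf_le1 0; lra.
Qed.

Lemma scinf1_le_double z : (0 < n1 x)%N -> in01 z -> scinf x 1 <= 2 * scinf x z.
Proof.
move=> /card_gt0P[j]; rewrite inE => xj hz; have /andP[z0 z1] := hz.
case: (lerP 2^-1 z) => zh.
  by apply: scinf_le_double => i; apply: cost1_le_double.
have : 2^-1 <= cost (x j) z by apply: cost_same_half; rewrite // xj ltW.
by have := le_scinf j z; have := scinf_le1 1; lra.
Qed.

End Profile.

Theorem theorem12 (R : realFieldType) (n : nat) (hn : (0 < n)%N) :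
  mech_approx 2 (@sc1 R n) /\ mech_approx 2 (@scinf R n).
Proof.
split=> x hx z hz.
  apply: le_trans (mech_sc1_le_min hx hn) _.
  by rewrite ler_pM2l // sc1_ge_min.
apply: mech_expected_le => // [n2_gt0 | n1_gt0].
  exact: scinf0_le_double.
exact: scinf1_le_double.
Qed.
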